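(* Let $M,N,P$ be regular languages over $\Sigma$ with state complexities $m,n,p\geq 3$ respectively. Then $$\mathrm{sc}(M\cdot(N\oplus P))\leq (m-1)\alpha_{n,p}+\alpha'_{n,p}.$$
   Context: $\mathrm{sc}(L)$ is the number of states of the minimal complete DFA of $L$; $\oplus$ is symmetric difference and $\cdot$ is concatenation. An $n\times p$ tableau is a subset $S$ of an $n\times p$ grid of cells; it is saturated if whenever cells $(x,x'),(x,y'),(y,y')$ are in $S$ then $(y,x')\in S$. $\alpha_{n,p}$ denotes the number of saturated $n\times p$ tableaux, and $\alpha'_{n,p}$ the number of saturated $n\times p$ tableaux containing a fixed given cell (this number does not depend on the cell). *)

From mathcomp Require Import all_boot.
Set Implicit Arguments. Unset Strict Implicit. Unset Printing Implicit Defensive.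

Definition lang (A : finType) := seq A -> bool.

Record dfa (A : finType) (k : nat) := Dfa {
  dfa_start : 'I_k;
  dfa_delta : 'I_k -> A -> 'I_k;
  dfa_final : pred 'I_k }.

Definition dfa_accepts (A : finType) k (D : dfa A k) (w : seq A) : bool :=
  dfa_final D (foldl (dfa_delta D) (dfa_start D) w).

Definition recognizes (A : finType) k (D : dfa A k) (L : lang A) : Prop :=
  forall w, dfa_accepts D w = L w.

Definition sc_le (A : finType) (L : lang A) (k : nat) : Prop :=
  exists k', k' <= k /\ exists D : dfa A k', recognizes D L.

Definition sc_eq (A : finType) (L : lang A) (k : nat) : Prop :=
  (exists D : dfa A k, recognizes D L) /\
  (forall k', k' < k -> forall D : dfa A k', ~ recognizes D L).

Definition lsymdiff (A : finType) (L1 L2 : lang A) : lang A :=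
  fun w => L1 w (+) L2 w.

Definition lconcat (A : finType) (L1 L2 : lang A) : lang A :=
  fun w => [exists i : 'I_(size w).+1, L1 (take i w) && L2 (drop i w)].

(* Tableaux: subsets of the n x p grid; cell (x, x') with row x, column x'. *)
Definition saturated n p (S : {set 'I_n * 'I_p}) : bool :=
  [forall x : 'I_n, forall y : 'I_n, forall x' : 'I_p, forall y' : 'I_p,
     [&& (x, x') \in S, (x, y') \in S & (y, y') \in S] ==> ((y, x') \in S)].

Definition alpha n p : nat :=
  #|[set S : {set 'I_n * 'I_p} | saturated S]|.

(* Number of saturated tableaux containing the fixed cell (0,0)
   (the count is independent of the chosen cell). *)
Definition contains_cell00 n p (S : {set 'I_n * 'I_p}) : bool :=
  [exists c in S, (nat_of_ord c.1 == 0) && (nat_of_ord c.2 == 0)].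

Definition alpha' n p : nat :=
  #|[set S : {set 'I_n * 'I_p} | saturated S && contains_cell00 S]|.

From mathcomp Require Import all_boot perm.
Set Implicit Arguments. Unset Strict Implicit. Unset Printing Implicit Defensive.

(* The automaton for M.(N (+) P) runs the DFA of M together with the set S of
   pairs (state of N, state of P) that are active in the second factor; it
   accepts when some pair of S is in exactly one final set.  Because of the
   parity identity
     acc(y,x') = acc(x,x') (+) acc(x,y') (+) acc(y,y'),
   closing S under the saturation rule does not change the language accepted
   from it, so one may keep S saturated.  Moreover, whenever the M-component
   is final, S contains the pair of initial states.  Fixing one final state
   q0 of M, the states are the m - 1 choices q <> q0 with any saturated S,
   and q0 with a saturated S through the initial cell, whence the bound. *)

Lemma sc_le_of_automaton (A : finType) (L : lang A) (T : finType) (s : T)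
    (d : T -> A -> T) (f : pred T) k :
  (forall w, f (foldl d s w) = L w) -> #|T| <= k -> sc_le L k.
Proof.
move=> accL leTk; exists #|T|; split=> //.
pose dI (i : 'I_#|T|) a := enum_rank (d (enum_val i) a).
exists (Dfa (enum_rank s) dI (fun i => f (enum_val i))) => w.
have runI t : foldl dI (enum_rank t) w = enum_rank (foldl d t w).
  by elim: w t => [|a w IHw] t //=; rewrite /dI enum_rankK IHw.
by rewrite /dfa_accepts /= runI enum_rankK.
Qed.

Lemma sc_le_of_invariant (A : finType) (L : lang A) (T : finType) (I : pred T)
    (s : T) (d : T -> A -> T) (f : pred T) k :
  I s -> (forall t a, I t -> I (d t a)) ->
  (forall w, f (foldl d s w) = L w) -> #|I| <= k -> sc_le L k.
Proof.
move=> Is Id accL leIk.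
pose dI (t : {t | I t}) a : {t | I t} := exist _ (d (val t) a) (Id _ a (valP t)).
apply: (@sc_le_of_automaton A L _ (exist _ s Is) dI (fun t => f (val t))).
  have runI w t : val (foldl dI t w) = foldl d (val t) w.
    by elim: w t => [|a w IHw] t //=; rewrite IHw.
  by move=> w; rewrite runI accL.
by rewrite card_sig.
Qed.

Lemma dfa_with_start (A : finType) k (D : dfa A k) (i : 'I_k) :
  exists D' : dfa A k, dfa_start D' = i /\ dfa_accepts D' =1 dfa_accepts D.
Proof.
pose s := tperm (dfa_start D) i.
exists (Dfa i (fun x a => s (dfa_delta D (s x) a)) (fun x => dfa_final D (s x))).
split=> // w; rewrite /dfa_accepts /=.
have runs x : s (foldl (fun x a => s (dfa_delta D (s x) a)) x w)
              = foldl (dfa_delta D) (s x) w.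
  by elim: w x => [|a w IHw] x /=; rewrite ?IHw ?tpermK.
by rewrite runs tpermR.
Qed.

Lemma has_iota0 k (f : pred nat) : has f (iota 0 k) = [exists i : 'I_k, f i].
Proof.
apply/hasP/existsP => [[x]|[i fi]]; last by exists (val i); rewrite ?mem_iota ?ltn_ord.
by rewrite mem_iota add0n => /andP[_ ltxk] fx; exists (Ordinal ltxk).
Qed.

Lemma saturatedP n p (S : {set 'I_n * 'I_p}) :
  reflect (forall x y x' y', (x, x') \in S -> (x, y') \in S -> (y, y') \in S ->
                             (y, x') \in S)
          (saturated S).
Proof.
apply: (iffP forallP) => [satS x y x' y' Sxx' Sxy' Syy'|satS x].
  by move/forallP: (satS x) => /(_ y)/forallP/(_ x')/forallP/(_ y')/implyP;
     apply; rewrite Sxx' Sxy' Syy'.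
do 3!apply/forallP => ?; apply/implyP => /and3P[]; exact: satS.
Qed.

Section Tableaux.

Variables (A : finType) (n p : nat).
Variables (dN : 'I_n -> A -> 'I_n) (dP : 'I_p -> A -> 'I_p).
Variables (fN : pred 'I_n) (fP : pred 'I_p).

Local Notation cell := ('I_n * 'I_p)%type.

Definition cell_step (c : cell) a : cell := (dN c.1 a, dP c.2 a).

Definition cell_accepts (c : cell) (u : seq A) : bool :=
  fN (foldl dN c.1 u) (+) fP (foldl dP c.2 u).

Definition tableau_lang (S : {set cell}) u := [exists c in S, cell_accepts c u].

Lemma cell_accepts_saturate x y x' y' u :
  cell_accepts (y, x') u ->
  [|| cell_accepts (x, x') u, cell_accepts (x, y') u | cell_accepts (y, y') u].
Proof.
by rewrite /cell_accepts /=; case: (fN (foldl dN x u)); case: (fN (foldl dN y u));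
   case: (fP (foldl dP x' u)); case: (fP (foldl dP y' u)).
Qed.

Definition saturation (S : {set cell}) : {set cell} :=
  [set c | [forall T : {set cell}, saturated T && (S \subset T) ==> (c \in T)]].

Lemma saturation_min (S T : {set cell}) :
  saturated T -> S \subset T -> saturation S \subset T.
Proof.
move=> satT sST; apply/subsetP => c; rewrite inE => /forallP/(_ T).
by rewrite satT sST.
Qed.

Lemma subset_saturation (S : {set cell}) : S \subset saturation S.
Proof.
by apply/subsetP => c Sc; rewrite inE; apply/forallP => T;
   apply/implyP => /andP[_ /subsetP]; apply.
Qed.

Lemma saturated_saturation (S : {set cell}) : saturated (saturation S).
Proof.
apply/saturatedP => x y x' y'; rewrite !inE => /forallP h1 /forallP h2 /forallP h3.
apply/forallP => T; apply/implyP => /[dup] hT /andP[/saturatedP satT _].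
by apply: satT; [move/implyP: (h1 T) | move/implyP: (h2 T) | move/implyP: (h3 T)];
   apply.
Qed.

Lemma tableau_lang_saturation (S : {set cell}) u :
  tableau_lang (saturation S) u = tableau_lang S u.
Proof.
apply/idP/idP => [|/existsP[c /andP[Sc acc]]]; last first.
  by apply/existsP; exists c; rewrite (subsetP (subset_saturation S)).
pose T := [set c | cell_accepts c u ==> tableau_lang S u].
have satT : saturated T.
  apply/saturatedP => x y x' y'; rewrite !inE => /implyP h1 /implyP h2 /implyP h3.
  by apply/implyP => /(cell_accepts_saturate x y') /or3P[/h1|/h2|/h3].
have sST : S \subset T.
  by apply/subsetP => c Sc; rewrite inE; apply/implyP => acc;
     apply/existsP; exists c; rewrite Sc.
case/existsP => c /andP[/(subsetP (saturation_min satT sST))].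
by rewrite inE => /implyP.
Qed.

Lemma tableau_langU (S1 S2 : {set cell}) u :
  tableau_lang (S1 :|: S2) u = tableau_lang S1 u || tableau_lang S2 u.
Proof.
apply/existsP/orP => [[c /andP[]]|[]/existsP[c /andP[Sc acc]]].
- by rewrite inE => /orP[] Sc acc; [left|right]; apply/existsP; exists c; rewrite Sc.
- by exists c; rewrite inE Sc.
- by exists c; rewrite inE Sc orbT.
Qed.

Lemma tableau_lang_step (S : {set cell}) a u :
  tableau_lang (cell_step^~ a @: S) u = tableau_lang S (a :: u).
Proof.
apply/existsP/existsP => [[_ /andP[/imsetP[c Sc ->] acc]]|[c /andP[Sc acc]]].
  by exists c; rewrite Sc.
by exists (cell_step c a); rewrite (imset_f (cell_step^~ a)) .
Qed.

Lemma tableau_lang_cell (b : bool) (c0 : cell) u :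
  tableau_lang [set c | b && (c == c0)] u = b && cell_accepts c0 u.
Proof.
apply/existsP/andP => [[c /andP[]]|[b_ acc]]; first by rewrite inE => /andP[-> /eqP->].
by exists c0; rewrite inE b_ eqxx.
Qed.

Section Concatenation.

Variables (m : nat) (dM : 'I_m -> A -> 'I_m) (fM : pred 'I_m) (sM : 'I_m).
Variable c0 : cell.

Definition enter (q : 'I_m) : {set cell} := [set c | fM q && (c == c0)].

Definition concat_start : 'I_m * {set cell} := (sM, saturation (enter sM)).

Definition concat_step (t : 'I_m * {set cell}) a : 'I_m * {set cell} :=
  (dM t.1 a, saturation (cell_step^~ a @: t.2 :|: enter (dM t.1 a))).

Definition concat_final (t : 'I_m * {set cell}) : bool := tableau_lang t.2 [::].

Local Notation concat_run w := (foldl concat_step concat_start w).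

Lemma concat_run_fst w : (concat_run w).1 = foldl dM sM w.
Proof. by elim/last_ind: w => [|w a IHw] //; rewrite !foldl_rcons /= IHw. Qed.

Lemma tableau_lang_concat_run w u :
  tableau_lang (concat_run w).2 u =
  has (fun i => fM (foldl dM sM (take i w)) && cell_accepts c0 (drop i w ++ u))
      (iota 0 (size w).+1).
Proof.
elim/last_ind: w u => [|w a IHw] u.
  by rewrite /= tableau_lang_saturation tableau_lang_cell orbF.
rewrite foldl_rcons [LHS]/= tableau_lang_saturation tableau_langU tableau_lang_step IHw.
rewrite tableau_lang_cell concat_run_fst size_rcons -[(size w).+2]addn1 iotaD.
rewrite has_cat has_seq1 -(size_rcons w a) take_size drop_size foldl_rcons.
congr (_ || _).
apply: eq_in_has => i; rewrite mem_iota add0n size_rcons ltnS => le_iw.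
rewrite -cats1 takel_cat // drop_cat.
case: ltngtP le_iw => // [_ _|-> _]; first by rewrite -catA.
by rewrite subnn drop0 drop_size.
Qed.

Lemma concat_accepts w :
  concat_final (concat_run w) =
  [exists i : 'I_(size w).+1,
     fM (foldl dM sM (take i w)) && cell_accepts c0 (drop i w)].
Proof.
rewrite /concat_final tableau_lang_concat_run has_iota0.
by apply: eq_existsb => i; rewrite cats0.
Qed.

Definition concat_invariant (q0 : 'I_m) (t : 'I_m * {set cell}) : bool :=
  saturated t.2 && ((t.1 == q0) ==> (c0 \in t.2)).

Lemma concat_invariant_saturation q0 q (S : {set cell}) :
  fM q0 -> enter q \subset S -> concat_invariant q0 (q, saturation S).
Proof.
move=> fq0 /subsetP sES; rewrite /concat_invariant saturated_saturation.
apply/implyP => /= /eqP q_q0; apply/(subsetP (subset_saturation _))/sES.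
by rewrite inE q_q0 fq0 eqxx.
Qed.

End Concatenation.

End Tableaux.

Lemma card_concat_invariant_le n p m (q0 : 'I_m) (c0 : 'I_n * 'I_p) :
  c0.1 = 0 :> nat -> c0.2 = 0 :> nat ->
  #|concat_invariant c0 q0| <= (m - 1) * alpha n p + alpha' n p.
Proof.
move=> c0_1 c0_2.
have cell00 S : contains_cell00 S = (c0 \in S).
  apply/existsP/idP => [[c /andP[Sc /andP[/eqP c_1 /eqP c_2]]]|Sc0].
    suff -> : c0 = c by [].
    case: c c_1 c_2 {Sc} => x y /= x0 y0; case: c0 c0_1 c0_2 => x' y' /= x'0 y'0.
    by congr pair; apply: val_inj; rewrite /= ?x0 ?y0 ?x'0 ?y'0.
  by exists c0; rewrite Sc0 c0_1 c0_2.
pose B := [set S : {set 'I_n * 'I_p} | saturated S].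
pose B' := [set S : {set 'I_n * 'I_p} | saturated S && contains_cell00 S].
apply: (@leq_trans #|setX [set q0] B' :|: setX [set~ q0] B|).
  apply/subset_leq_card/subsetP => -[q S]; rewrite unfold_in !inE /= cell00.
  by case: (q == q0); case: (saturated S); case: (c0 \in S).
rewrite cardsU (leq_trans (leq_subr _ _)) //.
by rewrite !cardsX cards1 cardsC1 card_ord mul1n addnC subn1.
Qed.

Lemma sc_le_empty (A : finType) (L : lang A) k :
  (forall w, L w = false) -> 0 < k -> sc_le L k.
Proof.
move=> L0 k_gt0; apply: (@sc_le_of_automaton A L unit tt (fun _ _ => tt) pred0).
  by move=> w; rewrite L0.
by rewrite card_unit.
Qed.

Lemma alpha'_gt0 n p : 0 < n -> 0 < p -> 0 < alpha' n p.
Proof.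
move=> n_gt0 p_gt0; apply/card_gt0P; exists setT; rewrite inE.
apply/andP; split; first by apply/saturatedP => *; rewrite inE.
by apply/existsP; exists (Ordinal n_gt0, Ordinal p_gt0); rewrite inE.
Qed.

Lemma sc_le_concat_symdiff (A : finType) (M N P : lang A) m n p
    (DM : dfa A m) (DN : dfa A n) (DP : dfa A p) :
  recognizes DM M -> recognizes DN N -> recognizes DP P ->
  dfa_start DN = 0 :> nat -> dfa_start DP = 0 :> nat ->
  sc_le (lconcat M (lsymdiff N P)) ((m - 1) * alpha n p + alpha' n p).
Proof.
move=> recM recN recP sN0 sP0.
pose c0 := (dfa_start DN, dfa_start DP).
have [q0 fq0|noFinal] := pickP (dfa_final DM); last first.
  have n_gt0 : 0 < n by rewrite -sN0 ltn_ord.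
  have p_gt0 : 0 < p by rewrite -sP0 ltn_ord.
  apply: sc_le_empty; last by rewrite ltn_addl // alpha'_gt0.
  by move=> w; apply/existsP => -[i /andP[]]; rewrite -recM /dfa_accepts noFinal.
apply: (@sc_le_of_invariant A _ _ (concat_invariant c0 q0)
  (concat_start (dfa_final DM) (dfa_start DM) c0)
  (concat_step (dfa_delta DN) (dfa_delta DP) (dfa_delta DM) (dfa_final DM) c0)
  (concat_final (dfa_delta DN) (dfa_delta DP) (dfa_final DN) (dfa_final DP) (m:=m))).
- exact: concat_invariant_saturation fq0 (subxx _).
- by move=> t a _; apply: concat_invariant_saturation fq0 (subsetUr _ _).
- move=> w; rewrite concat_accepts; apply: eq_existsb => i.
  by rewrite /lsymdiff -recM -recN -recP.
- exact: card_concat_invariant_le.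
Qed.

Theorem theorem1 (A : finType) (M N P : lang A) (m n p : nat) :
  3 <= m -> 3 <= n -> 3 <= p ->
  sc_eq M m -> sc_eq N n -> sc_eq P p ->
  sc_le (lconcat M (lsymdiff N P)) ((m - 1) * alpha n p + alpha' n p).
Proof.
move=> _ n_ge3 p_ge3 [[DM recM] _] [[DN recN] _] [[DP recP] _].
(* alpha' counts the tableaux through the cell (0, 0): renumber the initial states to 0. *)
have [DN' [sN0 accN]] := dfa_with_start DN (Ordinal (ltnW (ltnW n_ge3))).
have [DP' [sP0 accP]] := dfa_with_start DP (Ordinal (ltnW (ltnW p_ge3))).
apply: (sc_le_concat_symdiff (DN := DN') (DP := DP') recM).
- by move=> w; rewrite accN recN.
- by move=> w; rewrite accP recP.
- by rewrite sN0.
- by rewrite sP0.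
Qed.
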